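(* Let $T=(V,E)$ be a tree rooted at $r$, $w:V\to\mathbb R_{\ge0}$, and $C$ a partial coloring with domain $\mathrm{support}(w)=\{v:w(v)>0\}$. Assume: (i) there are no $x,y,z\in\mathrm{support}(w)$ with $y$ on the path from $x$ to $z$ and $C(x)=C(z)\neq C(y)$; (ii) no vertex lies in $\mathrm{carrier}(d_1,C)\cap\mathrm{carrier}(d_2,C)\cap\mathrm{carrier}(d_3,C)$ for three distinct colors. For each color $d$ let $r_d$ be the root (vertex closest to $r$) of $\mathrm{carrier}(d,C)$, and let $d_0$ be a color with $r_{d_0}$ at maximum distance from $r$; assume $r_{d_0}\neq r$ and let $s$ be the parent of $r_{d_0}$. Let $\bar T$ be the subtree of all descendants of $r_{d_0}$ (including $r_{d_0}$) and $\hat T=T\setminus\bar T$. Assume further that there is a color $d'\neq d_0$ with $C(V(\bar T))=\{d_0,d'\}$ and $r_{d_0}\in\mathrm{carrier}(d_0,C)\cap\mathrm{carrier}(d',C)$. All costs below are relative to $C|_{V(\bar T)}$ and $w|_{V(\bar T)}$. Let $C_{high}$ be the coloring of $V(\bar T)$ assigning $d_0$ to every vertex; let $C_{medium}$ be a minimum-cost convex coloring of $\bar T$ with colors in $\{d_0,d'\}$ among those that either equal $C_{high}$ or color $r_{d_0}$ by $d'$; let $C_{min}$ be a minimum-cost convex coloring of $\bar T$ with colors in $\{d_0,d'\}$. Define $(T',C',w_1)$: $T'$ is obtained from $T$ by replacing $\bar T$ with a two-vertex path consisting of $r_{d_0}$ (a child of $s$) and a single child $v_0$ of $r_{d_0}$;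 $w_1(v)=w(v)$ and $C'(v)=C(v)$ for $v\in V(\hat T)$; $w_1(r_{d_0})=\mathrm{cost}(C_{medium})-\mathrm{cost}(C_{min})$ and $w_1(v_0)=\mathrm{cost}(C_{high})-\mathrm{cost}(C_{min})$; $C'(r_{d_0})=d_0$ if $w_1(r_{d_0})>0$ and $C'(v_0)=d'$ if $w_1(v_0)>0$ (otherwise they are uncolored). Then $$\mathrm{OPT}(T',C',w_1)=\mathrm{OPT}(T,C,w)-\mathrm{cost}(C_{min}).$$
   Context: For a partial coloring $C$ and color $d$, $\mathrm{carrier}(d,C)$ is the minimal connected subtree containing all vertices $v$ with $C(v)=d$. A partial coloring of a tree is convex if it can be extended to a total coloring in which every color class induces a connected subtree. For a (partial) input coloring $C$ with weights $w$ and a convex total coloring $C''$, $\mathrm{cost}(C'')=w(\{v\in\mathrm{Domain}(C): C''(v)\neq C(v)\})$, and $\mathrm{OPT}(T,C,w)$ is the minimum cost of a convex total coloring of $T$ (equivalently the minimum weight of a set $X$ such that $C$ restricted to $\mathrm{Domain}(C)\setminus X$ is convex). *)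

From mathcomp Require Import all_boot all_order all_algebra.
Set Implicit Arguments. Unset Strict Implicit. Unset Printing Implicit Defensive.
Import Order.TTheory GRing.Theory Num.Theory.
Local Open Scope ring_scope.

Section Trees.
Variable V : finType.
Variable e : rel V.

Definition upath (x : V) (p : seq V) (y : V) : bool :=
  [&& path e x p, uniq (x :: p) & last x p == y].

Definition is_tree : Prop :=
  symmetric e /\ irreflexive e /\ forall x y : V, exists! p, upath x p y.

Definition on_path (x y z : V) : Prop := exists p, upath x p z /\ y \in x :: p.

Definition dist_is (x y : V) (n : nat) : Prop := exists p, upath x p y /\ size p = n.

Definition connected (A : {set V}) : Prop :=
  forall x y, x \in A -> y \in A ->
    exists p, [/\ path e x p, last x p = y & all (fun u => u \in A) p].

Variable K : eqType.

(* carrier(d,C): the minimal connected subtree containing all vertices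
   coloured d, i.e. the intersection of all connected vertex sets
   containing the colour class of d *)
Definition in_carrier (C : V -> option K) (d : K) (v : V) : Prop :=
  forall A : {set V}, connected A -> (forall u, C u = Some d -> u \in A) -> v \in A.

Definition carrier_root (r : V) (C : V -> option K) (d : K) (rd : V) : Prop :=
  in_carrier C d rd /\
  forall u n m, in_carrier C d u -> dist_is r rd n -> dist_is r u m -> (n <= m)%N.

Definition convex_on (S : {set V}) (f : V -> K) : Prop :=
  forall k : K, connected [set v in S | f v == k].

Variable R : realFieldType.

Definition cost_on (C : V -> option K) (w : V -> R) (S : {set V}) (f : V -> K) : R :=
  \sum_(v in S | (C v != None) && (C v != Some (f v))) w v.

Definition OPT_is (C : V -> option K) (w : V -> R) (o : R) : Prop :=
  (exists f : V -> K, convex_on setT f /\ cost_on C w setT f = o) /\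
  (forall f : V -> K, convex_on setT f -> o <= cost_on C w setT f).

End Trees.

(* Construction of T': vertices of hat T (= V \ Tb) plus two new vertices,
   inr false = r_{d0} (child of s) and inr true = v0 (child of r_{d0}). *)
Section NewTree.
Variables (V : finType) (K : eqType) (R : realFieldType).
Variables (e : rel V) (Tb : {set V}) (s : V).

Definition hatV := {v : V | v \notin Tb}.
Definition newV := (hatV + bool)%type.

Definition new_edge : rel newV := fun a b =>
  match a, b with
  | inl x, inl y => e (val x) (val y)
  | inl x, inr false => val x == s
  | inr false, inl y => val y == s
  | inr false, inr true => true
  | inr true, inr false => true
  | _, _ => false
  end.

Variables (w : V -> R) (C : V -> option K) (wr wv : R) (d0 d' : K).

Definition new_w : newV -> R := fun a =>
  match a with inl x => w (val x) | inr false => wr | inr true => wv end.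

Definition new_C : newV -> option K := fun a =>
  match a with
  | inl x => C (val x)
  | inr false => if 0 < wr then Some d0 else None
  | inr true => if 0 < wv then Some d' else None
  end.
End NewTree.

Arguments new_edge [V] e Tb s _ _.
Arguments new_w [V R] Tb w wr wv _.
Arguments new_C [V K R] Tb C wr wv d0 d' _.

(* Colour d0 never occurs in hat T: otherwise carrier(d0) would cross the edge
   {s, r_d0} and contain s, which is closer to r than r_d0.  That edge is a bridge,
   so a convex colouring of T is a pair of convex colourings of bar T and hat T
   such that every colour used on both sides colours both r_d0 and s.  After
   merging the d0-class of hat T into a neighbouring class when it does not reach
   r_d0 (free, since C avoids d0 on hat T), the part in bar T costs at least
   cost(C_medium) if d' is used in hat T and at r_d0, at least cost(C_high) if d'
   is used in hat T but not at r_d0 (then d' is absent from bar T), and at least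
   cost(C_min) otherwise; a colouring of bar T is reduced to the colours d0, d'
   by giving d' to the component of a d'-vertex outside the d0-class.  The
   gadget r_d0 - v0 charges exactly these excesses over cost(C_min), and
   conversely each colouring of the gadget is realised in bar T by C_high,
   C_medium or C_min. *)

From mathcomp Require Import all_boot all_order all_algebra boolp lra.
Set Implicit Arguments. Unset Strict Implicit. Unset Printing Implicit Defensive.
Import Order.TTheory GRing.Theory Num.Theory.
Local Open Scope ring_scope.

Section Walks.
Variables (V : finType) (e : rel V).
Hypothesis esym : symmetric e.
Implicit Types (A B S X : {set V}) (x y : V).

Definition walk A x y : Prop :=
  exists p, [/\ path e x p, last x p = y & all (fun u => u \in A) p].

Lemma walk_refl A x : walk A x x.
Proof. by exists [::]. Qed.

Lemma walk_edge A x y : e x y -> y \in A -> walk A x y.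
Proof. by move=> exy yA; exists [:: y]; rewrite /= exy yA. Qed.

Lemma walk_cat A x y z : walk A x y -> walk A y z -> walk A x z.
Proof.
move=> [p [p1 p2 p3]] [q [q1 q2 q3]]; exists (p ++ q).
by rewrite cat_path p1 last_cat p2 q1 q2 all_cat p3 q3.
Qed.

Lemma walk_sub A B x y : A \subset B -> walk A x y -> walk B x y.
Proof.
move=> /subsetP sAB [p [p1 p2 p3]]; exists p; split => //.
by apply/allP => u /(allP p3) /sAB.
Qed.

Lemma walk_ind A (P : V -> Prop) x y :
  P x -> (forall u v, P u -> e u v -> v \in A -> P v) -> walk A x y -> P y.
Proof.
move=> Px step [p [p1 <- p3]]; elim: p x Px p1 p3 => [|z p IH] x Px //=.
move=> /andP[exz pz] /andP[zA pA]; apply: IH pz pA; exact: step exz zA.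
Qed.

Lemma walk_sym A x y : x \in A -> walk A x y -> walk A y x.
Proof.
move=> xA wxy; suff [] : walk A y x /\ y \in A by [].
apply: (walk_ind (P := fun v => walk A v x /\ v \in A)) wxy.
  by split => //; exact: walk_refl.
move=> u v [wux uA] euv vA; split => //.
by apply: walk_cat wux; apply: walk_edge => //; rewrite esym.
Qed.

Lemma walk_closed A B x y :
  (forall u v, e u v -> u \in B -> v \in A -> v \in B) ->
  x \in B -> walk A x y -> walk B x y /\ y \in B.
Proof.
move=> clB xB; apply: (walk_ind (P := fun v => walk B x v /\ v \in B)).
  by split => //; exact: walk_refl.
move=> u v [wxu uB] euv vA; have vB := clB u v euv uB vA.
by split => //; apply: walk_cat wxu (walk_edge euv vB).
Qed.

Lemma walk_exit A X x y : x \in A -> walk A x y -> x \in X -> y \notin X ->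
  exists u v, [/\ e u v, u \in A, v \in A, u \in X & v \notin X].
Proof.
move=> xA [p [p1 p2 p3]]; elim: p x xA p1 p2 p3 => [|z p IH] x xA /=.
  by move=> _ -> _ ->.
move=> /andP[exz pz] lz /andP[zA pA] xX yX.
case zX: (z \in X); first exact: IH zA pz lz pA zX yX.
by exists x, z; rewrite exz xA zA xX zX.
Qed.

Lemma connected0 : connected e set0.
Proof. by move=> x y; rewrite inE. Qed.

Lemma connectedU_edge A B a b : connected e A -> connected e B ->
  a \in A -> b \in B -> e a b -> connected e (A :|: B).
Proof.
move=> cA cB aA bB eab x y.
have sA : A \subset A :|: B by apply/subsetP => z zA; rewrite inE zA.
have sB : B \subset A :|: B by apply/subsetP => z zB; rewrite inE zB orbT.
have wab : walk (A :|: B) a b by apply: walk_edge eab _; rewrite inE bB orbT.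
have wba : walk (A :|: B) b a by apply: walk_edge; rewrite 1?esym // inE aA.
rewrite !inE => /orP[xA|xB] /orP[yA|yB].
- exact: walk_sub sA (cA _ _ xA yA).
- apply: walk_cat (walk_sub sA (cA _ _ xA aA)) _.
  exact: walk_cat wab (walk_sub sB (cB _ _ bB yB)).
- apply: walk_cat (walk_sub sB (cB _ _ xB bB)) _.
  exact: walk_cat wba (walk_sub sA (cA _ _ aA yA)).
- exact: walk_sub sB (cB _ _ xB yB).
Qed.

Section Portal.
Variables (Z : {set V}) (z : V).
Hypothesis portal : forall x y, e x y -> x \in Z -> y \notin Z -> x = z.

Let retract v := if v \in Z then v else z.

Lemma walk_retract S x y : walk S x y -> walk (S :&: Z) (retract x) (retract y).
Proof.
move=> [p [p1 <- p3]]; elim: p x p1 p3 => [|u p IH] x /=.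
  by move=> _ _; exact: walk_refl.
move=> /andP[exu pu] /andP[uS pS]; apply: walk_cat (IH _ pu pS).
rewrite /retract; case xZ: (x \in Z); case uZ: (u \in Z).
- by apply: walk_edge exu _; rewrite inE uS uZ.
- by rewrite (portal exu xZ (negbT uZ)); exact: walk_refl.
- by rewrite esym in exu; rewrite (portal exu uZ (negbT xZ)); exact: walk_refl.
- exact: walk_refl.
Qed.

Lemma connectedI_portal S : connected e S -> connected e (S :&: Z).
Proof.
move=> cS x y; rewrite !inE => /andP[xS xZ] /andP[yS yZ].
by have := walk_retract (cS _ _ xS yS); rewrite /retract xZ yZ.
Qed.
End Portal.

Section Bridge.
Variables (X : {set V}) (u t : V).
Hypothesis bridge : forall x y, e x y -> x \in X -> y \notin X -> x = u /\ y = t.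
Hypotheses (eut : e u t) (uX : u \in X) (tX : t \notin X).

Lemma connectedI_bridge S : connected e S ->
  connected e (S :&: X) /\ connected e (S :&: ~: X).
Proof.
move=> cS; split; [apply: (connectedI_portal (z := u)) cS | apply: (connectedI_portal (z := t)) cS].
  by move=> x y exy xX yX; case: (bridge exy xX yX).
move=> x y exy; rewrite !inE negbK => xX yX; rewrite esym in exy.
by case: (bridge exy yX xX).
Qed.

Lemma connected_bridge_mem S x y : connected e S ->
  x \in S -> x \in X -> y \in S -> y \notin X -> u \in S /\ t \in S.
Proof.
move=> cS xS xX yS yX.
have [a [b [eab aS bS aX bX]]] := walk_exit xS (cS _ _ xS yS) xX yX.
by case: (bridge eab aX bX) => <- <-.
Qed.

Lemma connected_bridge_glue S : connected e (S :&: X) -> connected e (S :&: ~: X) ->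
  ((exists x, x \in S :&: X) -> (exists y, y \in S :&: ~: X) -> u \in S /\ t \in S) ->
  connected e S.
Proof.
move=> c1 c2 meet.
have -> : S = (S :&: X) :|: (S :&: ~: X) by rewrite -setIUr setUCr setIT.
have [[x xS] | noX] := pselect (exists x, x \in S :&: X); last first.
  suff -> : S :&: X = set0 by rewrite set0U.
  by apply/setP => v; rewrite [in RHS]inE; apply/negbTE/negP => vS; apply: noX; exists v.
have [[y yS] | noY] := pselect (exists y, y \in S :&: ~: X); last first.
  suff -> : S :&: ~: X = set0 by rewrite setU0.
  by apply/setP => v; rewrite [in RHS]inE; apply/negbTE/negP => vS; apply: noY; exists v.
have [uS tS] := meet (ex_intro _ x xS) (ex_intro _ y yS).
by apply: (connectedU_edge c1 c2 _ _ eut); rewrite !inE ?uS ?uX ?tS ?tX.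
Qed.
End Bridge.
End Walks.

Section Colourings.
Variables (V : finType) (e : rel V) (K : eqType).
Hypothesis esym : symmetric e.
Implicit Types (S X : {set V}) (f g h : V -> K) (k c : K).

Lemma convex_on_eq S f g : {in S, f =1 g} -> convex_on e S f -> convex_on e S g.
Proof.
move=> fg cf k; suff -> : [set v in S | g v == k] = [set v in S | f v == k] by [].
by apply/setP => v; rewrite !inE; case vS: (v \in S); rewrite //= fg.
Qed.

Lemma convex_on_const S k : connected e S -> convex_on e S (fun _ => k).
Proof.
move=> cS j; have [_|_] := eqVneq k j.
  by suff -> : [set v in S | true] = S by []; apply/setP => v; rewrite inE andbT.
suff -> : [set v in S | false] = set0 by exact: connected0.
by apply/setP => v; rewrite !inE andbF.
Qed.

Lemma convex_on_rename S f k c : convex_on e S f -> {in S, forall v, f v = c -> c = k} ->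
  convex_on e S (fun v => if f v == k then c else f v).
Proof.
move=> cf fc j; have [<-|cj] := eqVneq c j.
  suff -> : [set v in S | (if f v == k then c else f v) == c] = [set v in S | f v == k] by [].
  apply/setP => v; rewrite !inE; case vS: (v \in S) => //=.
  case: ifP => [_|fk]; first by rewrite eqxx.
  by apply/negbTE/eqP => fvc; move: fk; rewrite fvc (fc v vS fvc) eqxx.
have [<-|jk] := eqVneq j k.
  suff -> : [set v in S | (if f v == j then c else f v) == j] = set0 by exact: connected0.
  by apply/setP => v; rewrite !inE; case: ifP => [_|->]; rewrite ?(negbTE cj) andbF.
suff -> : [set v in S | (if f v == k then c else f v) == j] = [set v in S | f v == j] by [].
apply/setP => v; rewrite !inE; case: (eqVneq (f v) k) => [->|_] //=.
by rewrite (negbTE cj) eq_sym (negbTE jk).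
Qed.

(* [c] is the colour of a neighbour of the [k]-class. *)
Lemma convex_merge_class f k x y : connected e setT -> convex_on e setT f ->
  f x = k -> f y != k ->
  exists2 c, c != k & convex_on e setT (fun v => if f v == k then c else f v).
Proof.
move=> cT cf fx fy.
have xT : x \in [set: V] by rewrite inE.
have kx : x \in [set v | f v == k] by rewrite inE fx.
have ky : y \notin [set v | f v == k] by rewrite inE.
have [u [t [eut _ _ + +]]] := walk_exit xT (cT x y xT (in_setT y)) kx ky.
rewrite !inE => /eqP fu ft; exists (f t) => // j.
have [<-|jt] := eqVneq (f t) j.
  suff -> : [set v in setT | (if f v == k then f t else f v) == f t] =
            [set v in setT | f v == k] :|: [set v in setT | f v == f t].
    by apply: (connectedU_edge esym (cf k) (cf (f t)) _ _ eut); rewrite !inE ?fu ?eqxx.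
  by apply/setP => v; rewrite !inE; case: ifP; rewrite ?eqxx.
have [->|jk] := eqVneq j k.
  suff -> : [set v in setT | (if f v == k then f t else f v) == k] = set0 by exact: connected0.
  apply/setP => v; rewrite !inE.
  by case: ifP => [_|->] //; rewrite (negbTE ft).
suff -> : [set v in setT | (if f v == k then f t else f v) == j] = [set v in setT | f v == j].
  exact: cf.
apply/setP => v; rewrite !inE; case: (eqVneq (f v) k) => [->|_] //=.
by rewrite (negbTE jt) eq_sym (negbTE jk).
Qed.

Section Bridge.
Variables (X : {set V}) (u t : V).
Hypothesis bridge : forall x y, e x y -> x \in X -> y \notin X -> x = u /\ y = t.
Hypotheses (eut : e u t) (uX : u \in X) (tX : t \notin X).

Lemma convex_on_bridge f : convex_on e setT f -> convex_on e X f /\ convex_on e (~: X) f.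
Proof.
move=> cf; split=> k; have [cX cnX] := connectedI_bridge esym bridge (cf k).
  suff -> : [set v in X | f v == k] = [set v in setT | f v == k] :&: X by [].
  by apply/setP => v; rewrite !inE andbC.
suff -> : [set v in ~: X | f v == k] = [set v in setT | f v == k] :&: ~: X by [].
by apply/setP => v; rewrite !inE andbC.
Qed.

Lemma convex_bridge_colour f k x y : convex_on e setT f ->
  x \in X -> y \notin X -> f x = k -> f y = k -> f u = k /\ f t = k.
Proof.
move=> cf xX yX fx fy.
have [] := connected_bridge_mem bridge (x := x) (y := y) (cf k);
  by rewrite ?inE ?fx ?fy ?eqxx // => /eqP -> /eqP ->.
Qed.

Lemma convex_on_glue h g : convex_on e X h -> convex_on e (~: X) g ->
  (forall k, (exists2 x, x \in X & h x = k) -> (exists2 y, y \notin X & g y = k) ->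
     h u = k /\ g t = k) ->
  convex_on e setT (fun v => if v \in X then h v else g v).
Proof.
move=> ch cg meet k; apply: (connected_bridge_glue esym eut uX tX).
- suff -> : [set v in setT | (if v \in X then h v else g v) == k] :&: X =
            [set v in X | h v == k] by [].
  by apply/setP => v; rewrite !inE; case: (v \in X); rewrite ?andbT ?andbF.
- suff -> : [set v in setT | (if v \in X then h v else g v) == k] :&: ~: X =
            [set v in ~: X | g v == k] by [].
  by apply/setP => v; rewrite !inE; case: (v \in X); rewrite ?andbT ?andbF.
move=> [x] + [y]; rewrite !inE => /andP[/andP[_ hx] xX] /andP[/andP[_ gy] yX].
rewrite xX in hx; rewrite (negbTE yX) in gy.
have [hu gt] := meet k (ex_intro2 _ _ x xX (eqP hx)) (ex_intro2 _ _ y yX (eqP gy)).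
by rewrite uX hu (negbTE tX) gt eqxx.
Qed.
End Bridge.
End Colourings.

Section Component.
Variables (V : finType) (e : rel V).
Hypothesis esym : symmetric e.
Implicit Types (B : {set V}) (x y : V).

Definition erest B := [rel x y | e x y && (y \in B)].

Lemma walk_connectP B x y : walk e B x y <-> connect (erest B) x y.
Proof.
have path_erest p z : path (erest B) z p = path e z p && all (fun u => u \in B) p.
  by elim: p z => [|v p IH] z //=; rewrite IH; case: (e z v); case: (v \in B); rewrite ?andbF.
split=> [[p [p1 p2 p3]] | /connectP [p pp ->]].
  by apply/connectP; exists p; rewrite ?path_erest ?p1 ?p3 ?p2.
by exists p; move: pp; rewrite path_erest => /andP[-> ->].
Qed.

Variables (U S0 : {set V}) (b : V).
Hypotheses (cU : connected e U) (cS0 : connected e S0) (sS0U : S0 \subset U).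
Hypotheses (bU : b \in U) (bS0 : b \notin S0).

Definition component := [set v in U :\: S0 | connect (erest (U :\: S0)) b v].

Lemma component_root : b \in component.
Proof. by rewrite inE !inE bU bS0 connect0. Qed.

Lemma component_sub : component \subset U :\: S0.
Proof. by apply/subsetP => v; rewrite inE => /andP[]. Qed.

Lemma component_closed u v : e u v -> u \in component -> v \in U :\: S0 -> v \in component.
Proof.
move=> euv; rewrite inE => /andP[uB cu] vB; rewrite inE vB /=.
by apply: connect_trans cu (connect1 _); rewrite /= euv vB.
Qed.

Lemma connected_component : connected e component.
Proof.
move=> x y xC yC.
have bB : b \in U :\: S0 by rewrite !inE bU bS0.
have [wx wy] : walk e (U :\: S0) b x /\ walk e (U :\: S0) b y.
  by split; apply/walk_connectP; [move: xC | move: yC]; rewrite inE => /andP[].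
have [] := walk_closed component_closed xC (walk_cat (walk_sym esym bB wx) wy).
by [].
Qed.

Lemma component_max S1 : connected e S1 -> b \in S1 -> S1 \subset U :\: S0 ->
  S1 \subset component.
Proof.
move=> cS1 bS1 sS1; apply/subsetP => v vS1.
by have [] := walk_closed component_closed component_root (walk_sub sS1 (cS1 _ _ bS1 vS1)).
Qed.

Lemma walk_out_component x : x \in U :\: component ->
  exists2 z, z \in S0 & walk e (U :\: component) x z.
Proof.
have S0C z : z \in S0 -> z \notin component.
  by move=> zS0; apply/negP => /(subsetP component_sub); rewrite !inE zS0.
move=> xR; case xS0: (x \in S0); first by exists x => //; exact: walk_refl.
have xU : x \in U by move: xR; rewrite in_setD => /andP[].
have [p [p1 p2 p3]] := cU xU bU.
elim: p x xR xS0 xU p1 p2 p3 => [|y p IH] x xR xS0 xU /=.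
  by move=> _ xb; move: xR; rewrite xb in_setD component_root.
move=> /andP[exy py] ly /andP[yU pU].
have yR : y \in U :\: component.
  rewrite in_setD yU andbT; apply/negP => yC.
  case yS0: (y \in S0); first by move: yC; rewrite (negbTE (S0C y yS0)).
  have : x \in component by apply: (component_closed _ yC); [rewrite esym | rewrite !inE xS0 xU].
  by apply/negP; move: xR; rewrite in_setD => /andP[].
case yS0: (y \in S0); first by exists y => //; exact: walk_edge exy yR.
have [z zS0 wz] := IH y yR yS0 yU py ly pU.
by exists z => //; exact: walk_cat (walk_edge exy yR) wz.
Qed.

Lemma connected_setD_component : connected e (U :\: component).
Proof.
have sS0R : S0 \subset U :\: component.
  apply/subsetP => v vS0; rewrite in_setD (subsetP sS0U _ vS0) andbT.
  by apply/negP => /(subsetP component_sub); rewrite !inE vS0.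
move=> x y xR yR; change (walk e (U :\: component) x y).
have [z1 z1S0 w1] := walk_out_component xR.
have [z2 z2S0 w2] := walk_out_component yR.
apply: walk_cat w1 (walk_cat (walk_sub sS0R (cS0 z1S0 z2S0)) _).
exact: (walk_sym esym yR w2).
Qed.
End Component.

(* Colour the component of [b] outside the [k]-class by [k'] and everything else by [k]. *)
Lemma convex_two_colouring (V : finType) (e : rel V) (K : eqType) (U : {set V})
    (h : V -> K) (k k' : K) (b : V) :
  symmetric e -> connected e U -> convex_on e U h -> b \in U -> h b = k' -> k' != k ->
  exists h', [/\ convex_on e U h', {in U, forall v, h' v = k \/ h' v = k'},
    h' b = k' & {in U, forall v, h v = k \/ h v = k' -> h' v = h v}].
Proof.
move=> esym cU ch bU hb kk.
set S0 := [set v in U | h v == k].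
have bS0 : b \notin S0 by rewrite !inE hb (negbTE kk) andbF.
have sS0U : S0 \subset U by apply/subsetP => v; rewrite inE => /andP[].
have sS1 : [set v in U | h v == k'] \subset U :\: S0.
  by apply/subsetP => v; rewrite !inE => /andP[vU /eqP ->]; rewrite vU (negbTE kk).
have bS1 : b \in [set v in U | h v == k'] by rewrite !inE bU hb eqxx.
have cC := connected_component esym bU bS0.
have cR := connected_setD_component esym cU (ch k) sS0U bU bS0.
have S1C := component_max bU bS0 (ch k') bS1 sS1.
have bC := component_root e bU bS0.
have CS := component_sub e U S0 b.
set Cb := component e U S0 b in cC cR S1C bC CS; clearbody Cb.
exists (fun v => if v \in Cb then k' else k); split.
- move=> j; have [<-|jk'] := eqVneq k' j.
    suff -> : [set v in U | (if v \in Cb then k' else k) == k'] = Cb by [].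
    apply/setP => v; rewrite inE; case vC: (v \in Cb); last by rewrite eq_sym (negbTE kk) andbF.
    by rewrite eqxx andbT; move: (subsetP CS v vC); rewrite inE => /andP[].
  have [<-|jk] := eqVneq k j.
    suff -> : [set v in U | (if v \in Cb then k' else k) == k] = U :\: Cb by [].
    by apply/setP => v; rewrite !inE andbC; case: (v \in Cb); rewrite ?eqxx ?(negbTE kk).
  suff -> : [set v in U | (if v \in Cb then k' else k) == j] = set0 by exact: connected0.
  by apply/setP => v; rewrite !inE; case: (v \in Cb); rewrite ?(negbTE jk') ?(negbTE jk) andbF.
- by move=> v _; case: ifP; [right | left].
- by rewrite bC.
move=> v vU [] hv.
  have vC : v \notin Cb by apply/negP => /(subsetP CS); rewrite !inE hv eqxx vU.
  by rewrite (negbTE vC) hv.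
by rewrite (subsetP S1C v) ?hv // !inE vU hv eqxx.
Qed.

Section Trees.
Variables (V : finType) (e : rel V).
Hypothesis tree : is_tree e.

Lemma tree_sym : symmetric e. Proof. by case: tree. Qed.

Lemma upath_exists x y : exists p, upath e x p y.
Proof. by case: tree => _ [_ /(_ x y) [p [hp _]]]; exists p. Qed.

Lemma upath_uniq x y p q : upath e x p y -> upath e x q y -> p = q.
Proof.
case: tree => _ [_ /(_ x y) [p0 [_ p0_uniq]]] hp hq.
by rewrite -(p0_uniq _ hp) -(p0_uniq _ hq).
Qed.

Lemma connectedT : connected e setT.
Proof.
move=> x y _ _; have [p /and3P[p1 _ /eqP p3]] := upath_exists x y.
by exists p; split => //; apply/allP => z; rewrite inE.
Qed.

Lemma upath_prefix x p y u : upath e x p y -> u \in x :: p ->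
  exists p1 p2, [/\ p = p1 ++ p2, upath e x p1 u & (u != y -> p2 != [::])].
Proof.
move=> hp ux; case/splitPl: ux hp => p1 p2 lu /and3P[pp up /eqP ly].
exists p1, p2; split => //.
  apply/and3P; split; last by rewrite lu.
    by move: pp; rewrite cat_path => /andP[].
  by move: up; rewrite -cat_cons cat_uniq => /andP[].
by move=> uy; apply/eqP => p20; move: ly uy; rewrite p20 cats0 -lu => ->; rewrite eqxx.
Qed.

Lemma upath_last_edge x p y u : upath e x p y -> e u y -> u \in x :: p ->
  exists q, p = rcons q y /\ upath e x q u.
Proof.
move=> hp euy ux.
have uy : u != y by apply/eqP => uy; move: euy; rewrite uy; case: tree => _ [-> _].
have [p1 [p2 [pe hp1 /(_ uy) np2]]] := upath_prefix hp ux.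
move: (hp) (hp1) => /and3P[pp up /eqP ly] /and3P[pp1 up1 /eqP lp1].
have yp2 : y \in p2.
  case: p2 pe np2 => [//|z p2'] pe _.
  by move: ly; rewrite pe last_cat lp1 /= => <-; apply: mem_last.
have hq : upath e x (rcons p1 y) y.
  apply/and3P; split; last by rewrite last_rcons.
    by rewrite rcons_path pp1 lp1 euy.
  rewrite -rcons_cons rcons_uniq up1 andbT.
  by move: up; rewrite pe -cat_cons cat_uniq => /and3P[_ /hasPn /(_ y yp2)].
by exists p1; split => //; exact: upath_uniq hp hq.
Qed.

Section Subtree.
Variables (r a s : V) (Tb : {set V}).
Hypotheses (esa : e s a) (rsa : on_path e r s a).
Hypothesis Tb_def : forall v, v \in Tb <-> on_path e r a v.

Lemma root_in_subtree : a \in Tb.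
Proof.
apply/Tb_def; have [p hp] := upath_exists r a; exists p; split => //.
by move: hp => /and3P[_ _ /eqP <-]; exact: mem_last.
Qed.

Lemma upath_parent : exists q, upath e r (rcons q a) a /\ upath e r q s.
Proof.
case: rsa => p [hp sp]; have [q [pe hq]] := upath_last_edge hp esa sp.
by exists q; split => //; rewrite -pe.
Qed.

Lemma parent_notin_subtree : s \notin Tb.
Proof.
apply/negP => /Tb_def [p [hp ap]]; have [q [hqa hq]] := upath_parent.
rewrite (upath_uniq hp hq) in ap.
by move: hqa => /and3P[_ + _]; rewrite -rcons_cons rcons_uniq ap.
Qed.

Lemma subtree_bridge x y : e x y -> x \in Tb -> y \notin Tb -> x = a /\ y = s.
Proof.
move=> exy /Tb_def [px [hpx apx]] yT.
have nay : ~ on_path e r a y by move=> /Tb_def; apply/negP.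
have eyx : e y x by rewrite tree_sym.
have [yin | yout] := boolP (y \in r :: px); last first.
  exfalso; apply: nay; exists (rcons px y); split.
    move: hpx => /and3P[pp up /eqP lp]; apply/and3P; split.
    - by rewrite rcons_path pp lp exy.
    - by rewrite -rcons_cons rcons_uniq yout up.
    - by rewrite last_rcons.
  by rewrite -rcons_cons mem_rcons inE apx orbT.
have [q [pe hq]] := upath_last_edge hpx eyx yin.
move: apx; rewrite pe -rcons_cons mem_rcons inE => /orP[/eqP ax|aq]; last first.
  by case: nay; exists q.
subst x; split => //.
have [q' [hq'a hq']] := upath_parent.
have qq : q = q' by apply: (@rcons_injl _ a); rewrite -pe; exact: upath_uniq hpx hq'a.
by move: hq hq'; rewrite -qq => /and3P[_ _ /eqP <-] /and3P[_ _ /eqP <-].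
Qed.

(* [s] is closer to [r] than [a], so the carrier of a colour rooted at [a] cannot reach [s];
   but a carrier meeting both sides of the bridge [a s] must contain [s]. *)
Lemma carrier_root_subtree (K : eqType) (C : V -> option K) d z v :
  carrier_root e r C d a -> z \in Tb -> C z = Some d -> v \notin Tb -> C v != Some d.
Proof.
move=> [_ root_min] zT Cz vT; apply/negP => /eqP Cv.
have s_carrier : in_carrier e C d s.
  move=> A cA hA; have [_ ->] := connected_bridge_mem subtree_bridge cA (hA z Cz) zT (hA v Cv) vT.
  by [].
have [q [hqa hq]] := upath_parent.
have := root_min s _ _ s_carrier (ex_intro _ _ (conj hqa erefl)) (ex_intro _ _ (conj hq erefl)).
by rewrite size_rcons ltnn.
Qed.
End Subtree.
End Trees.

Section NewTree.
Variables (V : finType) (e : rel V) (Tb : {set V}) (s : V).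
Hypotheses (esym : symmetric e) (sTb : s \notin Tb).

Local Notation ne := (new_edge e Tb s).
Local Notation newV := (newV Tb).

Lemma new_edge_sym : symmetric ne.
Proof. by move=> [x|[]] [y|[]] //=; rewrite esym. Qed.

Definition gadget : {set newV} := [set x | ~~ is_inl x].
Lemma mem_gadget x : (x \in gadget) = ~~ is_inl x.
Proof. by rewrite inE. Qed.

Definition hat_parent : hatV Tb := Sub s sTb.

Lemma gadget_bridge x y : ne x y -> x \in gadget -> y \notin gadget ->
  x = inr false /\ y = inl hat_parent.
Proof.
rewrite !inE; case: x => [x|[]] //; case: y => [y|[]] //= /eqP ys _ _.
by split => //; congr inl; apply: val_inj.
Qed.

Lemma gadget_edge : ne (inr false) (inl hat_parent).
Proof. by rewrite /= eqxx. Qed.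

Lemma connectedI_gadget (S : {set newV}) : connected ne (S :&: gadget).
Proof.
move=> x y; rewrite !inE => /andP[_ xX] /andP[yS yX].
case: x y xX yX yS => [//|[]] [//|[]] // _ _ yS;
  by [exact: walk_refl | apply: walk_edge; rewrite // !inE yS].
Qed.

Lemma convex_on_gadget (K : eqType) (g : newV -> K) : convex_on ne gadget g.
Proof.
move=> k; suff -> : [set x in gadget | g x == k] = [set x | g x == k] :&: gadget.
  exact: connectedI_gadget.
by apply/setP => x; rewrite !inE andbC.
Qed.

Definition liftv (v : V) : newV :=
  if insub v is Some h then inl h else inr false.

Definition projv (x : newV) : V := if x is inl h then val h else s.

Lemma liftv_val (h : hatV Tb) : liftv (val h) = inl h.
Proof. by rewrite /liftv valK. Qed.

Lemma liftv_notin v (vT : v \notin Tb) : liftv v = inl (Sub v vT).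
Proof. by rewrite /liftv insubT. Qed.

Definition liftS (S : {set V}) : {set newV} :=
  [set x : newV | if x is inl h then val h \in S else false].

Lemma path_projv (S : {set V}) x p : path ne x p -> all (fun u => u \in liftS S) p ->
  is_inl x ->
  [/\ path e (projv x) (map projv p), all (fun u => u \in S) (map projv p)
    & last (projv x) (map projv p) = projv (last x p)].
Proof.
elim: p x => [|[hz|bz] p IH] x //=; last by move=> _ /andP[]; rewrite inE.
move=> /andP[ez pz] /andP[zS pS] ix.
have [q1 q2 q3] := IH _ pz pS erefl.
case: x ez ix => [hx|bx] //= ez _.
by rewrite ez q1 q2 q3; move: zS; rewrite inE => ->.
Qed.

Lemma connected_liftS (S : {set V}) : S \subset ~: Tb ->
  connected e S <-> connected ne (liftS S).
Proof.
move=> /subsetP sS; have notT v : v \in S -> v \notin Tb by move=> /sS; rewrite inE.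
split=> cS.
  move=> [hx|bx] [hy|by_] //; rewrite !inE // => hxS hyS.
  have [p [p1 p2 p3]] := cS _ _ hxS hyS.
  exists (map liftv p).
  elim: p hx hxS p1 p2 p3 => [|z p IH] hx hxS /=.
    by move=> _ hl _; split => //; congr inl; apply: val_inj.
  move=> /andP[ez pz] lz /andP[zS pS].
  have [q1 q2 q3] := IH (Sub z (notT z zS)) zS pz lz pS.
  by rewrite (liftv_notin (notT z zS)) /= ez q1 q2 !inE zS q3.
move=> x y xS yS.
have hx : inl (Sub x (notT x xS)) \in liftS S by rewrite inE.
have hy : inl (Sub y (notT y yS)) \in liftS S by rewrite inE.
have [p [p1 p2 p3]] := cS _ _ hx hy.
exists (map projv p).
by have [q1 q2 q3] := path_projv p1 p3 (erefl true); move: q1 q2 q3; rewrite p2.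
Qed.

Lemma convex_on_projv (K : eqType) (f : V -> K) :
  convex_on e (~: Tb) f <-> convex_on ne (~: gadget) (fun x => f (projv x)).
Proof.
have cls k : [set x in ~: gadget | f (projv x) == k] = liftS [set v in ~: Tb | f v == k].
  by apply/setP => [[h|[]]]; rewrite !inE //= (valP h).
have sub k : [set v in ~: Tb | f v == k] \subset ~: Tb.
  by apply/subsetP => v; rewrite inE => /andP[].
split=> cf k; first by rewrite /= cls; apply/connected_liftS.
by apply/(connected_liftS (sub k)); rewrite -cls; exact: cf.
Qed.

Lemma connected_new : connected e (~: Tb) -> connected ne setT.
Proof.
move=> cH; apply: (connected_bridge_glue new_edge_sym gadget_edge (X := gadget)).
- by rewrite !inE.
- by rewrite !inE.
- exact: connectedI_gadget.
- suff -> : [set: newV] :&: ~: gadget = liftS (~: Tb).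
    by apply/connected_liftS.
  by apply/setP => [[h|[]]]; rewrite !inE //= (valP h).
- by rewrite !inE.
Qed.

Section NewColourings.
Variable K : eqType.
Implicit Types (f : V -> K) (g : newV -> K).

Definition new_col f (A B : K) : newV -> K :=
  fun x => match x with inl h => f (val h) | inr false => A | inr true => B end.

Lemma convex_new_col f A B : convex_on e (~: Tb) f ->
  (forall k, (exists2 y, y \notin Tb & f y = k) -> A = k \/ B = k -> A = k /\ f s = k) ->
  convex_on ne setT (new_col f A B).
Proof.
move=> cf meet.
apply: (convex_on_eq (f := fun x => if x \in gadget then new_col f A B x else f (projv x))).
  by move=> [h|[]] _; rewrite inE.
have uX : inr false \in gadget by rewrite mem_gadget.
have tX : inl hat_parent \notin gadget by rewrite mem_gadget.
apply: (convex_on_glue new_edge_sym gadget_edge uX tX).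
- exact: convex_on_gadget.
- exact/convex_on_projv.
move=> k [x xX Bk] [y yX fy].
case: x xX Bk => [h|b]; first by rewrite mem_gadget.
case: y yX fy => [hy _ fy|]; last by move=> ?; rewrite mem_gadget.
by case: b => _ /= Bk; apply: (meet k (ex_intro2 _ _ (val hy) (valP hy) fy)); auto.
Qed.

Lemma convex_new_restrict g : convex_on ne setT g -> convex_on e (~: Tb) (fun v => g (liftv v)).
Proof.
move=> cg; apply/convex_on_projv.
have [_ cgH] := convex_on_bridge new_edge_sym gadget_bridge cg.
apply: (convex_on_eq _ cgH) => -[h _|b]; first by rewrite /= liftv_val.
by rewrite inE mem_gadget.
Qed.

Lemma new_bridge_colour g k y : convex_on ne setT g -> y \notin Tb -> g (liftv y) = k ->
  g (inr false) = k \/ g (inr true) = k -> g (inr false) = k /\ g (liftv s) = k.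
Proof.
move=> cg yT gy gadk; rewrite (liftv_notin sTb).
have [x [xX gx]] : exists x, x \in gadget /\ g x = k.
  by case: gadk => ?; [exists (inr false) | exists (inr true)]; rewrite mem_gadget.
have [] := convex_bridge_colour gadget_bridge cg xX _ gx gy.
  by rewrite (liftv_notin yT) mem_gadget.
by [].
Qed.
End NewColourings.
End NewTree.

Section Costs.
Variables (R : realFieldType) (V : finType) (K : eqType).
Variables (C : V -> option K) (w : V -> R).
Implicit Types (S : {set V}) (f g h : V -> K).

Lemma cost_on_le S f g : {in S, forall v, 0 <= w v} ->
  {in S, forall v, f v != g v -> C v != Some (g v)} ->
  cost_on C w S f <= cost_on C w S g.
Proof.
move=> w0 fg; rewrite /cost_on [X in X <= _]big_mkcond [X in _ <= X]big_mkcond /=.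
apply: ler_sum => v _; case vS: (v \in S) => //=.
have [/andP[c1 c2]|_] := boolP ((C v != None) && (C v != Some (f v))).
  by have [<-|/(fg v vS) ->] := eqVneq (f v) (g v); rewrite ?c1 ?c2.
by case: ifP => // _; exact: w0.
Qed.

Lemma cost_on_eq S f g : {in S, f =1 g} -> cost_on C w S f = cost_on C w S g.
Proof.
by move=> fg; apply: eq_bigl => v; case vS: (v \in S) => //=; rewrite fg.
Qed.

Lemma cost_on_glue S h g :
  cost_on C w setT (fun v => if v \in S then h v else g v) =
  cost_on C w S h + cost_on C w (~: S) g.
Proof.
rewrite /cost_on (bigID (fun v => v \in S)) /=; congr (_ + _); apply: eq_bigl => v;
  by rewrite !inE; case: (v \in S); rewrite /= ?andbT ?andbF.
Qed.

Lemma cost_on_setT_split S f : cost_on C w setT f = cost_on C w S f + cost_on C w (~: S) f.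
Proof.
by rewrite -cost_on_glue; apply: cost_on_eq => v _; case: (v \in S).
Qed.
End Costs.

(* Minimise over the finite set of possible sets of recoloured vertices. *)
Lemma convex_cost_minimizer (R : realFieldType) (V : finType) (K : eqType)
    (e : rel V) (C : V -> option K) (w : V -> R) (f0 : V -> K) :
  convex_on e setT f0 -> exists2 f, convex_on e setT f &
    forall g, convex_on e setT g -> cost_on C w setT f <= cost_on C w setT g.
Proof.
move=> cf0.
pose changed (f : V -> K) := [set v | (C v != None) && (C v != Some (f v))].
have costE f : cost_on C w setT f = \sum_(v in changed f) w v.
  by apply: eq_bigl => v; rewrite !inE.
pose P X := exists2 f, convex_on e setT f & changed f = X.
have P0 : `[< P (changed f0) >] by apply/asboolP; exists f0.
have [X /asboolP [f cf <-] Xmin] := arg_minP (P := fun X => `[< P X >])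
  (fun X => \sum_(v in X) w v) P0.
exists f => // g cg; rewrite !costE; apply: Xmin; apply/asboolP; by exists g.
Qed.

Section NewCosts.
Variables (R : realFieldType) (V : finType) (K : eqType) (Tb : {set V}).
Variables (C : V -> option K) (w : V -> R) (wr wv : R) (d0 d' : K).
Hypotheses (wr_ge0 : 0 <= wr) (wv_ge0 : 0 <= wv).

Lemma cost_gadget_vertex (x : R) (c c' : K) : 0 <= x ->
  (if ((if 0 < x then Some c else None) != None) &&
      ((if 0 < x then Some c else None) != Some c') then x else 0) =
  (if c' == c then 0 else x).
Proof.
move=> x_ge0; have [x_gt0|] := boolP (0 < x).
  by rewrite /= (inj_eq Some_inj) eq_sym; case: eqP.
rewrite -leNgt => x_le0; have -> : x = 0 by apply/eqP; rewrite eq_le x_le0.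
by case: ifP.
Qed.

Lemma cost_new (g : newV Tb -> K) :
  cost_on (new_C Tb C wr wv d0 d') (new_w Tb w wr wv) setT g =
  cost_on C w (~: Tb) (fun v => g (liftv Tb v)) +
  ((if g (inr false) == d0 then 0 else wr) + (if g (inr true) == d' then 0 else wv)).
Proof.
pose P v := (C v != None) && (C v != Some (g (liftv Tb v))).
have sum_hat : \sum_(h : hatV Tb | P (val h)) w (val h) = \sum_(v | (v \notin Tb) && P v) w v.
  rewrite [RHS](eq_bigl (fun v => (v \in [pred v | v \notin Tb]) && P v)) // [RHS]big_sub_cond.
  reflexivity.
rewrite /cost_on big_sumType /=; congr (_ + _).
  rewrite (eq_bigl (fun h : hatV Tb => P (val h))); last by move=> h; rewrite inE /= /P liftv_val.
  by rewrite sum_hat; apply: eq_bigl => v; rewrite inE.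
by rewrite big_mkcond big_bool /= !inE /= addrC !cost_gadget_vertex.
Qed.
End NewCosts.

Lemma convex_drop_colour (R : realFieldType) (V : finType) (K : eqType) (e : rel V)
    (C : V -> option K) (w : V -> R) (f : V -> K) (k : K) (y : V) :
  symmetric e -> connected e setT -> (forall v, 0 <= w v) ->
  convex_on e setT f -> f y != k -> (forall v, f v = k -> C v != Some k) ->
  exists2 f', convex_on e setT f' &
    (forall v, f' v != k) /\ cost_on C w setT f' <= cost_on C w setT f.
Proof.
move=> esym cT w0 cf fy fC.
have [[x fx] | no_k] := pselect (exists x, f x = k); last first.
  by exists f => //; split => // v; apply/eqP => fv; apply: no_k; exists v.
have [c ck cf'] := convex_merge_class esym cT cf fx fy.
exists (fun v => if f v == k then c else f v) => //; split.
  by move=> v; case: (eqVneq (f v) k).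
apply: cost_on_le => [v _|v _]; first exact: w0.
by case: (eqVneq (f v) k) => [fv _|_]; [rewrite fv; exact: fC | rewrite eqxx].
Qed.

Section Reduction.
Variables (R : realFieldType) (V : finType) (K : eqType) (e : rel V) (w : V -> R)
  (C : V -> option K) (r a s : V) (Tb : {set V}) (d0 d' : K) (Cmed Cmin : V -> K).
Hypotheses (tree : is_tree e) (w_ge0 : forall v, 0 <= w v).
Hypotheses (esa : e s a) (rsa : on_path e r s a).
Hypothesis Tb_def : forall v, v \in Tb <-> on_path e r a v.
Hypothesis d'_neq_d0 : d' != d0.
Hypothesis C_subtree : forall v c, v \in Tb -> C v = Some c -> c = d0 \/ c = d'.
Hypothesis C_hat : forall v, v \notin Tb -> C v != Some d0.
Hypotheses (Cmin_col : forall v, v \in Tb -> Cmin v = d0 \/ Cmin v = d')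
  (Cmin_convex : convex_on e Tb Cmin)
  (Cmin_min : forall f : V -> K, (forall v, v \in Tb -> f v = d0 \/ f v = d') ->
      convex_on e Tb f -> cost_on C w Tb Cmin <= cost_on C w Tb f).
Hypotheses (Cmed_col : forall v, v \in Tb -> Cmed v = d0 \/ Cmed v = d')
  (Cmed_convex : convex_on e Tb Cmed)
  (Cmed_form : (forall v, v \in Tb -> Cmed v = d0) \/ Cmed a = d')
  (Cmed_min : forall f : V -> K, (forall v, v \in Tb -> f v = d0 \/ f v = d') ->
      convex_on e Tb f -> ((forall v, v \in Tb -> f v = d0) \/ f a = d') ->
      cost_on C w Tb Cmed <= cost_on C w Tb f).

Local Notation high := (cost_on C w Tb (fun _ => d0)).
Local Notation med := (cost_on C w Tb Cmed).
Local Notation mn := (cost_on C w Tb Cmin).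
Local Notation ne := (new_edge e Tb s).
Local Notation nC := (new_C Tb C (med - mn) (high - mn) d0 d').
Local Notation nw := (new_w Tb w (med - mn) (high - mn)).
Local Notation lift := (liftv Tb).

Let esym : symmetric e := tree_sym tree.
Let eas : e a s. Proof. by rewrite esym. Qed.
Let a_Tb : a \in Tb := root_in_subtree tree Tb_def.
Let s_hat : s \notin Tb := parent_notin_subtree tree esa rsa Tb_def.
Let bridge := subtree_bridge tree esa rsa Tb_def.

Lemma connected_subtree : connected e Tb.
Proof. by have [] := connectedI_bridge esym bridge (connectedT tree); rewrite setTI. Qed.

Lemma connected_hat : connected e (~: Tb).
Proof. by have [_] := connectedI_bridge esym bridge (connectedT tree); rewrite setTI. Qed.

Lemma convex_const_d0 : convex_on e Tb (fun _ => d0).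
Proof. exact: convex_on_const connected_subtree. Qed.

Lemma min_le_med : mn <= med.
Proof. exact: Cmin_min. Qed.

Lemma med_le_high : med <= high.
Proof. by apply: Cmed_min; [move=> *; left | exact: convex_const_d0 | left]. Qed.

Lemma w1r_ge0 : 0 <= med - mn.
Proof. by rewrite subr_ge0 min_le_med. Qed.

Lemma w1v_ge0 : 0 <= high - mn.
Proof. by rewrite subr_ge0 (le_trans min_le_med med_le_high). Qed.

Lemma cost_subtree_le h h' : {in Tb, forall v, h v = d0 \/ h v = d' -> h' v = h v} ->
  cost_on C w Tb h' <= cost_on C w Tb h.
Proof.
move=> hh'; apply: cost_on_le => [v _|v vT neq]; first exact: w_ge0.
by apply/eqP => Cv; rewrite (hh' v vT (C_subtree vT Cv)) eqxx in neq.
Qed.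

Lemma cost_ge_min h : convex_on e Tb h -> mn <= cost_on C w Tb h.
Proof.
move=> ch; have [[b bT hb] | no_d'] := pselect (exists2 b, b \in Tb & h b = d').
  have [h' [ch' h'col _ h'h]] :=
    convex_two_colouring esym connected_subtree ch bT hb d'_neq_d0.
  exact: le_trans (Cmin_min h'col ch') (cost_subtree_le h'h).
apply: le_trans (Cmin_min (f := fun _ => d0) _ convex_const_d0) (cost_subtree_le _).
  by move=> v _; left.
by move=> v vT [-> // | hv]; case: no_d'; exists v.
Qed.

Lemma cost_ge_med h : convex_on e Tb h -> h a = d' -> med <= cost_on C w Tb h.
Proof.
move=> ch ha; have [h' [ch' h'col h'a h'h]] :=
  convex_two_colouring esym connected_subtree ch a_Tb ha d'_neq_d0.
exact: le_trans (Cmed_min h'col ch' (or_intror h'a)) (cost_subtree_le h'h).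
Qed.

Lemma cost_ge_high h : {in Tb, forall v, h v != d'} -> high <= cost_on C w Tb h.
Proof.
move=> hd'; apply: cost_subtree_le => v vT [-> // | hv].
by move: (hd' v vT); rewrite hv eqxx.
Qed.

Definition gadget_cost (A B : K) : R :=
  (if A == d0 then 0 else med - mn) + (if B == d' then 0 else high - mn).

Lemma new_w_ge0 x : 0 <= nw x.
Proof. by case: x => [h|[]] /=; [exact: w_ge0 | exact: w1v_ge0 | exact: w1r_ge0]. Qed.

Lemma cost_new_gadget (g : newV Tb -> K) :
  cost_on nC nw setT g = cost_on C w (~: Tb) (fun v => g (lift v)) +
    gadget_cost (g (inr false)) (g (inr true)).
Proof. exact: cost_new w1r_ge0 w1v_ge0 g. Qed.

Definition anchored (f : V -> K) := forall v, v \notin Tb -> f v = d0 -> f a = d0.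
Definition new_anchored (g : newV Tb -> K) :=
  forall v, v \notin Tb -> g (lift v) = d0 -> g (inr false) = d0.

Lemma anchored_exists f : convex_on e setT f ->
  exists2 f', convex_on e setT f' & anchored f' /\ cost_on C w setT f' <= cost_on C w setT f.
Proof.
move=> cf; have [fa | fa] := eqVneq (f a) d0; first by exists f => //; split.
have [[u uT fu] | no_hat] := pselect (exists2 u, u \notin Tb & f u = d0); last first.
  by exists f => //; split => // v vT fv; case: no_hat; exists v.
have fC v : f v = d0 -> C v != Some d0.
  move=> fv; have [vT | vT] := boolP (v \in Tb); last exact: C_hat.
  by have [fa' _] := convex_bridge_colour bridge cf vT uT fv fu; rewrite fa' eqxx in fa.
have [f' cf' [no_d0 le]] := convex_drop_colour esym (connectedT tree) w_ge0 cf fa fC.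
by exists f' => //; split => // v _ /eqP; rewrite (negbTE (no_d0 v)).
Qed.

Lemma new_anchored_exists g : convex_on ne setT g ->
  exists2 g', convex_on ne setT g' &
    new_anchored g' /\ cost_on nC nw setT g' <= cost_on nC nw setT g.
Proof.
move=> cg; have [A0 | A0] := eqVneq (g (inr false)) d0; first by exists g => //; split.
have gC x : g x = d0 -> nC x != Some d0.
  case: x => [h|[]] /= gx.
  - exact: C_hat (valP h).
  - by case: ifP => // _; rewrite (inj_eq Some_inj).
  - by rewrite gx eqxx in A0.
have cT := connected_new esym s_hat connected_hat.
have [g' cg' [no_d0 le]] := convex_drop_colour (new_edge_sym (Tb := Tb) s esym) cT new_w_ge0 cg A0 gC.
by exists g' => //; split => // v _ /eqP; rewrite (negbTE (no_d0 _)).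
Qed.

Section ToNew.
Variable f : V -> K.
Hypotheses (cf : convex_on e setT f) (af : anchored f).

Let cf_Tb : convex_on e Tb f := (convex_on_bridge esym bridge cf).1.
Let cf_hat : convex_on e (~: Tb) f := (convex_on_bridge esym bridge cf).2.

Lemma cost_new_col A B :
  cost_on nC nw setT (new_col f A B) = cost_on C w (~: Tb) f + gadget_cost A B.
Proof.
rewrite cost_new_gadget; congr (_ + _); apply: cost_on_eq => v.
by rewrite inE => vT; rewrite (liftv_notin vT).
Qed.

Lemma anchored_meet k : (exists2 y, y \notin Tb & f y = k) -> d0 = k -> d0 = k /\ f s = k.
Proof.
move=> [y yT fy] k0; rewrite -k0 in fy *; split => //.
exact: (convex_bridge_colour bridge cf a_Tb yT (af yT fy) fy).2.
Qed.

Lemma to_new_med y : y \notin Tb -> f y = d' -> f a = d' ->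
  exists2 g, convex_on ne setT g & cost_on nC nw setT g + mn <= cost_on C w setT f.
Proof.
move=> yT fy fa; exists (new_col f d' d').
  apply: (convex_new_col esym s_hat cf_hat) => k [y' yT' fy'] kk.
  have k_d' : k = d' by case: kk.
  rewrite k_d' in fy' *; split => //.
  exact: (convex_bridge_colour bridge cf a_Tb yT' fa fy').2.
rewrite cost_new_col (cost_on_setT_split _ _ Tb) /gadget_cost eqxx (negbTE d'_neq_d0).
by have := cost_ge_med cf_Tb fa; lra.
Qed.

Lemma to_new_high y : y \notin Tb -> f y = d' -> f a != d' ->
  exists2 g, convex_on ne setT g & cost_on nC nw setT g + mn <= cost_on C w setT f.
Proof.
move=> yT fy fa; exists (new_col f d0 d0).
  apply: (convex_new_col esym s_hat cf_hat) => k fk kk.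
  by apply: anchored_meet fk _; case: kk.
rewrite cost_new_col (cost_on_setT_split _ _ Tb) /gadget_cost eqxx eq_sym (negbTE d'_neq_d0).
have : high <= cost_on C w Tb f.
  apply: cost_ge_high => v vT; apply/eqP => fv.
  by have [fa' _] := convex_bridge_colour bridge cf vT yT fv fy; rewrite fa' eqxx in fa.
lra.
Qed.

Lemma to_new_min : {in ~: Tb, forall y, f y != d'} ->
  exists2 g, convex_on ne setT g & cost_on nC nw setT g + mn <= cost_on C w setT f.
Proof.
move=> no_d'; exists (new_col f d0 d').
  apply: (convex_new_col esym s_hat cf_hat) => k fk [k0 | kd'].
    exact: anchored_meet fk k0.
  case: fk => y yT fy; have := no_d' y; rewrite inE => /(_ yT).
  by rewrite fy -kd' eqxx.
rewrite cost_new_col (cost_on_setT_split _ _ Tb) /gadget_cost !eqxx.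
by have := cost_ge_min cf_Tb; lra.
Qed.

Lemma to_new :
  exists2 g, convex_on ne setT g & cost_on nC nw setT g + mn <= cost_on C w setT f.
Proof.
have [[y yT fy] | no_d'] := pselect (exists2 y, y \notin Tb & f y = d').
  have [fa | fa] := eqVneq (f a) d'; [exact: to_new_med yT fy fa | exact: to_new_high yT fy fa].
by apply: to_new_min => y; rewrite inE => yT; apply/eqP => fy; apply: no_d'; exists y.
Qed.
End ToNew.

Section FromNew.
Variable g : newV Tb -> K.
Hypotheses (cg : convex_on ne setT g) (ag : new_anchored g).

Local Notation gH := (fun v => g (lift v)).

Let cgH : convex_on e (~: Tb) gH := convex_new_restrict esym s_hat cg.

Lemma hat_meet k y : y \notin Tb -> g (lift y) = k ->
  g (inr false) = k \/ g (inr true) = k -> g (inr false) = k /\ g (lift s) = k.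
Proof. by move=> yT gy gad; exact: (new_bridge_colour s_hat cg yT gy gad). Qed.

Lemma from_new_high : g (inr true) != d' ->
  exists2 f, convex_on e setT f & cost_on C w setT f <= cost_on nC nw setT g + mn.
Proof.
move=> Bd'; exists (fun v => if v \in Tb then d0 else gH v).
  apply: (convex_on_glue esym eas a_Tb s_hat convex_const_d0 cgH) => k [x _ <-] [y yT gy].
  by have [_ ->] := hat_meet yT gy (or_introl (ag yT gy)).
rewrite cost_on_glue cost_new_gadget /gadget_cost (negbTE Bd').
by have := w1r_ge0; case: (_ == d0); lra.
Qed.

Lemma from_new_med : g (inr true) = d' -> g (inr false) != d0 ->
  exists2 f, convex_on e setT f & cost_on C w setT f <= cost_on nC nw setT g + mn.
Proof.
move=> Bd' Ad0; exists (fun v => if v \in Tb then Cmed v else gH v).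
  apply: (convex_on_glue esym eas a_Tb s_hat Cmed_convex cgH) => k [x xT Cx] [y yT gy].
  have [Cx0 | Cx'] := Cmed_col xT.
    by rewrite -Cx Cx0 in gy; rewrite (ag yT gy) eqxx in Ad0.
  rewrite -Cx Cx' in gy *; have [_ ->] := hat_meet yT gy (or_intror Bd'); split => //.
  case: Cmed_form => // all_d0.
  by rewrite all_d0 // in Cx'; move: d'_neq_d0; rewrite Cx' eqxx.
rewrite cost_on_glue cost_new_gadget /gadget_cost Bd' (negbTE Ad0) eqxx.
lra.
Qed.

Lemma from_new_min : g (inr true) = d' -> g (inr false) = d0 ->
  exists2 f, convex_on e setT f & cost_on C w setT f <= cost_on nC nw setT g + mn.
Proof.
move=> Bd' A0.
have no_d' y : y \notin Tb -> gH y != d'.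
  move=> yT; apply/eqP => gy; have [Ad' _] := hat_meet yT gy (or_intror Bd').
  by move: d'_neq_d0; rewrite -Ad' A0 eqxx.
pose gH' v := if gH v == d0 then Cmin a else gH v.
have cgH' : convex_on e (~: Tb) gH'.
  apply: (convex_on_rename cgH) => v; rewrite inE /= => vT gv.
  case: (Cmin_col a_Tb) => // ca.
  by move: (no_d' v vT); rewrite /= gv ca eqxx.
exists (fun v => if v \in Tb then Cmin v else gH' v).
  apply: (convex_on_glue esym eas a_Tb s_hat Cmin_convex cgH') => k [x xT Cx] [y yT].
  rewrite /gH'; case: eqP => [gy <- | gy0 gy].
    by have [_ ->] := hat_meet yT gy (or_introl A0); rewrite eqxx.
  case: (Cmin_col xT) => cx; rewrite -Cx cx in gy; first by case: (gy0 gy).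
  by move: (no_d' y yT); rewrite /= gy eqxx.
rewrite cost_on_glue cost_new_gadget /gadget_cost A0 Bd' !eqxx addr0.
have : cost_on C w (~: Tb) gH' <= cost_on C w (~: Tb) gH.
  apply: cost_on_le => [v _|v]; first exact: w_ge0.
  rewrite inE /gH' => vT; case: (eqVneq (g (lift v)) d0) => [-> _|_]; last by rewrite eqxx.
  exact: C_hat.
lra.
Qed.

Lemma from_new :
  exists2 f, convex_on e setT f & cost_on C w setT f <= cost_on nC nw setT g + mn.
Proof.
have [Bd' | Bd'] := eqVneq (g (inr true)) d'; last exact: from_new_high.
have [A0 | Ad0] := eqVneq (g (inr false)) d0; [exact: from_new_min | exact: from_new_med].
Qed.
End FromNew.

Lemma OPT_new : exists o, OPT_is e C w o /\ OPT_is ne nC nw (o - mn).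
Proof.
have [f0 cf0 f0_min] := convex_cost_minimizer C w (convex_on_const (k := d0) (connectedT tree)).
have lower g : convex_on ne setT g -> cost_on C w setT f0 - mn <= cost_on nC nw setT g.
  move=> cg; have [g' cg' [ag' le1]] := new_anchored_exists cg.
  have [f cf le2] := from_new cg' ag'.
  by have := f0_min f cf; lra.
have [f' cf' [af' le1]] := anchored_exists cf0.
have [g cg le2] := to_new cf' af'.
exists (cost_on C w setT f0); split; first by split; [exists f0 | exact: f0_min].
split => //; exists g; split => //.
by apply/eqP; rewrite eq_le lower // andbT; have := f0_min f' cf'; lra.
Qed.
End Reduction.

Theorem mainTheorem9 (R : realFieldType) (V : finType) (K : eqType)
  (e : rel V) (r : V) (w : V -> R) (C : V -> option K)
  (rd : K -> V) (d0 d' : K) (s : V) (Tb : {set V}) (Cmed Cmin : V -> K) :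
  is_tree e ->
  (forall v, 0 <= w v) ->
  (forall v, (C v != None) = (0 < w v)) ->
  ~ (exists x y z, [/\ 0 < w x /\ 0 < w y /\ 0 < w z, on_path e x y z,
                       C x = C z & C x != C y]) ->
  ~ (exists v d1 d2 d3, [/\ [/\ d1 != d2, d1 != d3 & d2 != d3],
        in_carrier e C d1 v, in_carrier e C d2 v & in_carrier e C d3 v]) ->
  (forall d, (exists v, C v = Some d) -> carrier_root e r C d (rd d)) ->
  (exists v, C v = Some d0) ->
  (forall d n m, (exists v, C v = Some d) ->
      dist_is e r (rd d) n -> dist_is e r (rd d0) m -> (n <= m)%N) ->
  rd d0 != r ->
  e s (rd d0) -> on_path e r s (rd d0) ->
  (forall v, v \in Tb <-> on_path e r (rd d0) v) ->
  d' != d0 ->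
  (forall v c, v \in Tb -> C v = Some c -> c = d0 \/ c = d') ->
  (exists v, v \in Tb /\ C v = Some d0) ->
  (exists v, v \in Tb /\ C v = Some d') ->
  in_carrier e C d0 (rd d0) -> in_carrier e C d' (rd d0) ->
  (forall v, v \in Tb -> Cmin v = d0 \/ Cmin v = d') ->
  convex_on e Tb Cmin ->
  (forall f : V -> K, (forall v, v \in Tb -> f v = d0 \/ f v = d') ->
      convex_on e Tb f -> cost_on C w Tb Cmin <= cost_on C w Tb f) ->
  (forall v, v \in Tb -> Cmed v = d0 \/ Cmed v = d') ->
  convex_on e Tb Cmed ->
  ((forall v, v \in Tb -> Cmed v = d0) \/ Cmed (rd d0) = d') ->
  (forall f : V -> K, (forall v, v \in Tb -> f v = d0 \/ f v = d') ->
      convex_on e Tb f ->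
      ((forall v, v \in Tb -> f v = d0) \/ f (rd d0) = d') ->
      cost_on C w Tb Cmed <= cost_on C w Tb f) ->
  let costHigh := cost_on C w Tb (fun _ => d0) in
  let costMed := cost_on C w Tb Cmed in
  let costMin := cost_on C w Tb Cmin in
  let w1r := costMed - costMin in
  let w1v := costHigh - costMin in
  exists o : R,
    OPT_is e C w o /\
    OPT_is (new_edge e Tb s) (new_C Tb C w1r w1v d0 d')
           (new_w Tb w w1r w1v) (o - costMin).
Proof.
move=> tree w_ge0 _ _ _ roots d0_used _ _ esa rsa Tb_def d'_neq_d0 C_subtree [z [zT Cz]] _ _ _
  Cmin_col Cmin_convex Cmin_min Cmed_col Cmed_convex Cmed_form Cmed_min.
have C_hat v : v \notin Tb -> C v != Some d0.
  exact: (carrier_root_subtree tree esa rsa Tb_def (roots d0 d0_used) zT Cz).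
exact: (OPT_new tree w_ge0 esa rsa Tb_def d'_neq_d0 C_subtree C_hat Cmin_col Cmin_convex
  Cmin_min Cmed_col Cmed_convex Cmed_form Cmed_min).
Qed.
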